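(* Let $H\in M_{M\times N}(\mathbb T)$ be a partial Hadamard matrix with rows $R_1,\ldots,R_M\in\mathbb T^N$. Then there is a unique unital $*$-representation $\pi_H:\widetilde A_s(M)\to M_N(\mathbb C)$ with $\pi_H(u_{ij})=\mathrm{Proj}(R_i/R_j)$ for all $i,j$.
   Context: $\mathbb T$ is the unit circle. A partial Hadamard matrix is a matrix $H\in M_{M\times N}(\mathbb T)$ whose rows are pairwise orthogonal in $\mathbb C^N$. $R_i/R_j\in\mathbb T^N$ denotes entrywise division, and $\mathrm{Proj}(\xi)$ denotes the orthogonal projection onto $\mathbb C\xi$. A submagic matrix over a unital $C^*$-algebra is a square matrix whose entries are orthogonal projections, pairwise orthogonal within each row and within each column; $\widetilde A_s(M)$ is the universal unital $C^*$-algebra generated by the entries $u_{ij}$ of an $M\times M$ submagic matrix. *)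

From HB Require Import structures.
From mathcomp Require Import all_boot all_order all_algebra.
From mathcomp Require Import complex.
From mathcomp Require Import reals.
Set Implicit Arguments. Unset Strict Implicit. Unset Printing Implicit Defensive.
Import Order.TTheory GRing.Theory Num.Theory.
Local Open Scope ring_scope.

Section Defs.
Variable R : realType.
Local Notation C := (R[i]).

Definition ctmx (m n : nat) (X : 'M[C]_(m, n)) : 'M[C]_(n, m) :=
  \matrix_(i, j) (X j i)^*.

Definition partial_hadamard (M N : nat) (H : 'M[C]_(M, N)) : Prop :=
  (forall i k, `|H i k| = 1) /\
  (forall i j : 'I_M, i != j -> \sum_(k < N) H i k * (H j k)^* = 0).

Definition row_ratio (M N : nat) (H : 'M[C]_(M, N)) (i j : 'I_M) : 'I_N -> C :=
  fun k => H i k / H j k.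

(* orthogonal projection onto C xi, i.e. xi xi^* / <xi, xi>
   (equal to 0 when xi = 0) *)
Definition Proj (N : nat) (xi : 'I_N -> C) : 'M[C]_N :=
  \matrix_(a, b) (xi a * (xi b)^* / \sum_(k < N) xi k * (xi k)^*).

Definition star_algebra (A : lalgType C) (star : A -> A) : Prop :=
  [/\ involutive star,
      (forall a b, star (a + b) = star a + star b),
      (forall (c : C) a, star (c *: a) = c^* *: star a) &
      (forall a b, star (a * b) = star b * star a)].

Definition unital_star_rep (A : lalgType C) (star : A -> A) (k : nat)
    (pi : A -> 'M[C]_k) : Prop :=
  [/\ (forall a b, pi (a + b) = pi a + pi b),
      (forall (c : C) a, pi (c *: a) = c *: pi a),
      (forall a b, pi (a * b) = pi a *m pi b),
      pi 1 = 1%:M &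
      (forall a, pi (star a) = ctmx (pi a))].

Definition submagic (A : lalgType C) (star : A -> A) (M : nat)
    (u : 'I_M -> 'I_M -> A) : Prop :=
  [/\ (forall i j, star (u i j) = u i j /\ u i j * u i j = u i j),
      (forall i j k, j != k -> u i j * u i k = 0) &
      (forall i j k, i != k -> u i j * u k j = 0)].

Definition submagic_mx (k M : nat) (Q : 'I_M -> 'I_M -> 'M[C]_k) : Prop :=
  [/\ (forall i j, ctmx (Q i j) = Q i j /\ Q i j *m Q i j = Q i j),
      (forall i j l, j != l -> Q i j *m Q i l = 0) &
      (forall i j l, i != l -> Q i j *m Q l j = 0)].

(* The universal property of A~_s(M) = C*(u_ij | u submagic), restricted to
   representations on finite-dimensional Hilbert spaces C^k (the only
   targets relevant to the statement). *)
Definition submagic_universal (A : lalgType C) (star : A -> A) (M : nat)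
    (u : 'I_M -> 'I_M -> A) : Prop :=
  forall (k : nat) (Q : 'I_M -> 'I_M -> 'M[C]_k), submagic_mx Q ->
    exists pi : A -> 'M[C]_k,
      (unital_star_rep star pi /\ forall i j, pi (u i j) = Q i j) /\
      (forall pi' : A -> 'M[C]_k,
         unital_star_rep star pi' /\ (forall i j, pi' (u i j) = Q i j) ->
         pi' = pi).

End Defs.

From HB Require Import structures.
From mathcomp Require Import all_boot all_order all_algebra.
From mathcomp Require Import complex.
From mathcomp Require Import reals.
From mathcomp Require Import ring.
Set Implicit Arguments. Unset Strict Implicit. Unset Printing Implicit Defensive.
Import Order.TTheory GRing.Theory Num.Theory.
Local Open Scope ring_scope.

(* By the universal property of the submagic algebra it suffices to check that
   the rank-one projections Proj (R_i/R_j) form a submagic matrix in M_N(C).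
   Each Proj is a self-adjoint idempotent, and Proj xi Proj eta vanishes as soon
   as xi and eta are orthogonal.  For unimodular entries, the inner product of
   R_i/R_j with R_i/R_l is <R_j, R_l> and that of R_i/R_j with R_l/R_j is
   <R_l, R_i>, so both vanish by orthogonality of the rows of H. *)

Section Projections.
Variables (R : realType) (N : nat).
Implicit Types xi eta : 'I_N -> R[i].

Lemma ctmx_Proj xi : ctmx (Proj xi) = Proj xi.
Proof.
apply/matrixP => a b; rewrite !mxE rmorphM fmorphV rmorph_sum /=.
rewrite rmorphM /= conjCK [_^* * _]mulrC; congr (_ * _^-1).
by apply: eq_bigr => k _; rewrite rmorphM /= conjCK mulrC.
Qed.

Lemma mulmx_Proj xi eta :
  Proj xi *m Proj eta = \matrix_(a, b)
    ((\sum_(c < N) (xi c)^* * eta c) * (xi a * (eta b)^*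
       / (\sum_(k < N) xi k * (xi k)^*) / (\sum_(k < N) eta k * (eta k)^*))).
Proof.
apply/matrixP => a b; rewrite !mxE big_distrl /=; apply: eq_bigr => c _.
by rewrite !mxE; ring.
Qed.

Lemma Proj_idem xi : Proj xi *m Proj xi = Proj xi.
Proof.
rewrite mulmx_Proj; apply/matrixP => a b; rewrite !mxE.
under eq_bigr do rewrite mulrC.
set s := \sum_(k < N) _.
have [-> | s0] := eqVneq s 0; first by rewrite invr0 !mulr0.
by field.
Qed.

Lemma mulmx_Proj_orth xi eta :
  \sum_(c < N) (xi c)^* * eta c = 0 -> Proj xi *m Proj eta = 0.
Proof.
by move=> orth; rewrite mulmx_Proj; apply/matrixP => a b; rewrite !mxE orth mul0r.
Qed.

End Projections.

Section Unimodular.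
Variable C : numClosedFieldType.
Implicit Types a b c : C.

Lemma invC_unimodular a : `|a| = 1 -> a^-1 = a^*.
Proof. by move=> a1; rewrite invC_norm a1 expr1n invr1 mul1r. Qed.

Lemma unimodular_conjK a : `|a| = 1 -> a^* * a = 1.
Proof. by move=> a1; rewrite -invC_unimodular // mulVf // -normr_eq0 a1 oner_eq0. Qed.

Lemma conj_div_mul_div_den a b c :
  `|b| = 1 -> (a / b)^* * (c / b) = c * a^*.
Proof.
move=> b1; rewrite (invC_unimodular b1) rmorphM /= conjCK.
by rewrite mulrACA [b * _]mulrC unimodular_conjK // mulr1 mulrC.
Qed.

Lemma conj_div_mul_div_num a b c :
  `|a| = 1 -> `|b| = 1 -> `|c| = 1 -> (a / b)^* * (a / c) = b * c^*.
Proof.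
move=> a1 b1 c1; rewrite (invC_unimodular b1) (invC_unimodular c1).
by rewrite rmorphM /= conjCK mulrACA unimodular_conjK // mul1r.
Qed.

End Unimodular.

Section PartialHadamard.
Variables (R : realType) (M N : nat) (H : 'M[R[i]]_(M, N)).
Hypothesis hadH : partial_hadamard H.

Lemma row_ratio_orthr i j l : j != l ->
  \sum_(c < N) (row_ratio H i j c)^* * row_ratio H i l c = 0.
Proof.
have [unitH orthH] := hadH; move=> /orthH {2}<-.
by apply: eq_bigr => c _; rewrite conj_div_mul_div_num.
Qed.

Lemma row_ratio_orthl i j l : i != l ->
  \sum_(c < N) (row_ratio H i j c)^* * row_ratio H l j c = 0.
Proof.
have [unitH orthH] := hadH; rewrite eq_sym => /orthH {2}<-.
by apply: eq_bigr => c _; rewrite conj_div_mul_div_den.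
Qed.

Lemma submagic_mx_Proj_row_ratio :
  submagic_mx (fun i j => Proj (row_ratio H i j)).
Proof.
split=> [i j | i j l jl | i j l il].
- by rewrite ctmx_Proj Proj_idem.
- exact/mulmx_Proj_orth/row_ratio_orthr.
- exact/mulmx_Proj_orth/row_ratio_orthl.
Qed.

End PartialHadamard.

Theorem proposition2p1 (R : realType) (M N : nat) (H : 'M[R[i]]_(M, N))
    (A : lalgType R[i]) (star : A -> A) (u : 'I_M -> 'I_M -> A) :
  partial_hadamard H ->
  star_algebra star -> submagic star u -> submagic_universal star u ->
  exists! pi : A -> 'M[R[i]]_N,
    unital_star_rep star pi /\
    forall i j, pi (u i j) = Proj (row_ratio H i j).
Proof.
move=> hadH _ _ univ_u.
have [pi [pi_rep pi_unique]] := univ_u N _ (submagic_mx_Proj_row_ratio hadH).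
by exists pi; split=> // pi' pi'_rep; rewrite (pi_unique pi').
Qed.
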